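(* Suppose $\eta_j^2L^2B_j<b_j^2$. For the biased batched SVRG (Algorithm 3), $$\Big(b_j-\frac{(1-\lambda)^2\eta_j^2L^2B_j}{b_j}\Big)\mathbb{E}\|\tilde x_j-\tilde x_{j-1}\|^2+2\eta_jB_j\,\mathbb{E}\langle e_j,\tilde x_j-\tilde x_{j-1}\rangle\le-2(1-\lambda)\eta_jB_j\,\mathbb{E}\langle\nabla f(\tilde x_j),\tilde x_j-\tilde x_{j-1}\rangle+2(1-\lambda)^2\eta_j^2B_j\,\mathbb{E}\|\nabla f(\tilde x_j)\|^2+2\eta_j^2B_j\,\mathbb{E}\|e_j\|^2.$$
   Context: Setting: $f(x)=\frac1n\sum_{i=1}^n f_i(x)$ with each $f_i:\mathbb{R}^d\to\mathbb{R}$ differentiable and $L$-smooth: $\|\nabla f_i(x)-\nabla f_i(y)\|\le L\|x-y\|$. For $\mathcal I\subset\{1,\dots,n\}$, $\nabla f_{\mathcal I}(x)=\frac1{|\mathcal I|}\sum_{i\in\mathcal I}\nabla f_i(x)$. $N\sim\mathrm{Geom}(\gamma')$ means $P(N=k)=(1-\gamma')\gamma'^k$, $k\ge0$. Epoch $j$ of the batched SVRG scheme: $\mathcal I_j$ uniformly random of size $B_j$, $g_j=\nabla f_{\mathcal I_j}(\tilde x_{j-1})$, $x^{(j)}_0=\tilde x_{j-1}$; $N_j\sim\mathrm{Geom}(B_j/(B_j+b_j))$ drawn independently (mean $B_j/b_j$); for $k=0,\dots,N_j-1$, $\tilde{\mathcal I}_k$ uniformly random of size $b_j$ and $x^{(j)}_{k+1}=x^{(j)}_k-\eta_jv^{(j)}_k$;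 $\tilde x_j=x^{(j)}_{N_j}$. Algorithm 3 (biased, $0<\lambda<1$): $v^{(j)}_k=(1-\lambda)(\nabla f_{\tilde{\mathcal I}_k}(x^{(j)}_k)-\nabla f_{\tilde{\mathcal I}_k}(x^{(j)}_0))+\lambda g_j$, and $e_j=\lambda\nabla f_{\mathcal I_j}(\tilde x_{j-1})-(1-\lambda)\nabla f(\tilde x_{j-1})$. $\mathbb{E}$ is expectation over all randomness. *)

From HB Require Import structures.
From mathcomp Require Import all_boot all_order all_algebra.
From mathcomp Require Import all_classical all_reals.
From mathcomp Require Import topology normedtype sequences derive.
Set Implicit Arguments.
Unset Strict Implicit.
Unset Printing Implicit Defensive.
Import Order.TTheory GRing.Theory Num.Theory.
Import numFieldNormedType.Exports.
Local Open Scope ring_scope.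

Definition dotv (R : realType) (d : nat) (u v : 'rV[R]_d) : R :=
  \sum_(k < d) u ord0 k * v ord0 k.
Definition enorm (R : realType) (d : nat) (u : 'rV[R]_d) : R :=
  Num.sqrt (dotv u u).

Definition is_gradient (R : realType) (d : nat)
    (f : 'rV[R]_d -> R) (g : 'rV[R]_d -> 'rV[R]_d) : Prop :=
  forall x, differentiable f x /\ forall v, 'D_v f x = dotv (g x) v.

Definition L_lipschitz_grad (R : realType) (d : nat) (L : R)
    (g : 'rV[R]_d -> 'rV[R]_d) : Prop :=
  forall x y, enorm (g x - g y) <= L * enorm (x - y).

Definition grad_batch (R : realType) (n d : nat)
    (gradf : 'I_n -> 'rV[R]_d -> 'rV[R]_d) (I : {set 'I_n}) (x : 'rV[R]_d)
    : 'rV[R]_d :=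
  (#|I|%:R)^-1 *: \sum_(i in I) gradf i x.

(* grad f (x) = 1/n sum_i grad f_i (x)  (gradient of f = 1/n sum f_i) *)
Definition grad_full (R : realType) (n d : nat)
    (gradf : 'I_n -> 'rV[R]_d -> 'rV[R]_d) (x : 'rV[R]_d) : 'rV[R]_d :=
  (n%:R)^-1 *: \sum_(i < n) gradf i x.

(* expectation of F(S) for S a uniformly random subset of {1..n} of size m *)
Definition unif_avg (R : realType) (n m : nat) (F : {set 'I_n} -> R) : R :=
  (\sum_(S : {set 'I_n} | #|S| == m) F S)
    / (#|[set S : {set 'I_n} | #|S| == m]|)%:R.

(* one inner step of Algorithm 3 with minibatch S, anchor x0, g = g_j:
   x_{k+1} = x_k - eta * ((1-lam)(grad f_S(x_k) - grad f_S(x0)) + lam g) *)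
Definition alg3_step (R : realType) (n d : nat)
    (gradf : 'I_n -> 'rV[R]_d -> 'rV[R]_d) (lam eta : R)
    (x0 g : 'rV[R]_d) (S : {set 'I_n}) (x : 'rV[R]_d) : 'rV[R]_d :=
  x - eta *: ((1 - lam) *: (grad_batch gradf S x - grad_batch gradf S x0)
              + lam *: g).

(* E[F(x_k)] where x_0 = x and x_{i+1} = step S_i x_i, the S_i being
   independent uniformly random subsets of size b *)
Fixpoint inner_exp (R : realType) (n d : nat) (b : nat)
    (step : {set 'I_n} -> 'rV[R]_d -> 'rV[R]_d) (F : 'rV[R]_d -> R)
    (k : nat) (x : 'rV[R]_d) : R :=
  match k with
  | 0 => F x
  | k'.+1 => unif_avg b (fun S => inner_exp b step F k' (step S x))
  end.

Definition geom_param (R : realType) (B b : nat) : R :=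
  B%:R / (B + b)%:R.

Definition geom_pmf (R : realType) (B b : nat) (k : nat) : R :=
  (1 - geom_param R B b) * (geom_param R B b) ^+ k.

(* Expectation, over all the randomness of epoch j (I_j, N_j and the inner
   minibatches), of Phi(I_j, xtilde_j), with xtilde_{j-1} = x0. *)
Definition epoch_exp (R : realType) (n d : nat)
    (gradf : 'I_n -> 'rV[R]_d -> 'rV[R]_d) (lam eta : R) (B b : nat)
    (x0 : 'rV[R]_d) (Phi : {set 'I_n} -> 'rV[R]_d -> R) : R :=
  unif_avg B (fun I =>
    limn (series (fun k =>
      geom_pmf R B b k *
      inner_exp b (alg3_step gradf lam eta x0 (grad_batch gradf I x0))
                (Phi I) k x0))).

(* E || xtilde_j - xtilde_{j-1} ||^2 is finite: for every possible I_j the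
   series defining the expectation over N_j converges. *)
Definition finite_second_moment (R : realType) (n d : nat)
    (gradf : 'I_n -> 'rV[R]_d -> 'rV[R]_d) (lam eta : R) (B b : nat)
    (x0 : 'rV[R]_d) : Prop :=
  forall I : {set 'I_n}, #|I| = B ->
    cvgn (series (fun k =>
      geom_pmf R B b k *
      inner_exp b (alg3_step gradf lam eta x0 (grad_batch gradf I x0))
                (fun x => enorm (x - x0) ^+ 2) k x0)).

Definition err_j (R : realType) (n d : nat)
    (gradf : 'I_n -> 'rV[R]_d -> 'rV[R]_d) (lam : R) (x0 : 'rV[R]_d)
    (I : {set 'I_n}) : 'rV[R]_d :=
  lam *: grad_batch gradf I x0 - (1 - lam) *: grad_full gradf x0.

From HB Require Import structures.
From mathcomp Require Import all_boot all_order all_algebra.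
From mathcomp Require Import all_classical all_reals.
From mathcomp Require Import topology normedtype sequences derive.
From mathcomp Require Import fingroup perm.
From mathcomp Require Import ring lra.
Import Order.TTheory GRing.Theory Num.Theory.
Import numFieldNormedType.Exports.
Set Implicit Arguments.
Unset Strict Implicit.
Local Open Scope ring_scope.

(* Fix the outer minibatch I, hence g = grad f_I(x0) and
   e = lam g - (1 - lam) grad f(x0), and write D(x) = |x - x0|^2.
   1. Sampling without replacement: the mean of a uniformly random b-subset
      of w_1, ..., w_n is unbiased, and its second moment exceeds the square
      of the population mean by at most (b n)^-1 sum_i |w_i|^2.
   2. One inner step from any x, averaged over its minibatch S, satisfies
        E_S D(x+) - D(x) + 2 eta <(1 - lam) grad f(x) + e, x - x0>
          <= eta^2 ((1-lam)^2 L^2 D(x)/b + 2(1-lam)^2 |grad f(x)|^2 + 2|e|^2),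
      by 1 applied to the smoothness-controlled w_i = (1-lam)(grad f_i(x)
      - grad f_i(x0)).
   3. For N ~ Geom(B/(B+b)) and F(x0) = 0, memorylessness gives
      B E F(x_{N+1}) = (B + b) E F(x_N).
   Multiplying 2 at x = x_N by B, averaging over N and the inner minibatches
   (these expectations are linear and monotone) and using 3 for F = D, which
   replaces B (E D(x_{N+1}) - E D(x_N)) by b E D(x_N), gives the claim for
   fixed I; averaging over I concludes.  The finite second moment of D
   dominates all other series involved. *)

Section InnerProduct.
Variables (R : realType) (d : nat).
Implicit Types (u v w : 'rV[R]_d).

Lemma dotvC u v : dotv u v = dotv v u.
Proof. by apply: eq_bigr => k _; rewrite mulrC. Qed.

Lemma dotvDl u v w : dotv (u + v) w = dotv u w + dotv v w.
Proof. by rewrite /dotv -big_split; apply: eq_bigr => k _; rewrite mxE mulrDl. Qed.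

Lemma dotvZl a u v : dotv (a *: u) v = a * dotv u v.
Proof. by rewrite /dotv mulr_sumr; apply: eq_bigr => k _; rewrite mxE mulrA. Qed.

Lemma dotvNl u v : dotv (- u) v = - dotv u v.
Proof. by rewrite -scaleN1r dotvZl mulN1r. Qed.

Lemma dotv0l v : dotv 0 v = 0.
Proof. by rewrite -(scale0r 0) dotvZl mul0r. Qed.

Lemma dotvBl u v w : dotv (u - v) w = dotv u w - dotv v w.
Proof. by rewrite dotvDl dotvNl. Qed.

Lemma dotvDr u v w : dotv w (u + v) = dotv w u + dotv w v.
Proof. by rewrite dotvC dotvDl !(dotvC w). Qed.

Lemma dotvZr a u v : dotv v (a *: u) = a * dotv v u.
Proof. by rewrite dotvC dotvZl dotvC. Qed.

Lemma dotvBr u v w : dotv w (u - v) = dotv w u - dotv w v.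
Proof. by rewrite !(dotvC w) dotvBl. Qed.

Lemma dotv_suml (I : finType) (P : pred I) (F : I -> 'rV[R]_d) v :
  dotv (\sum_(i | P i) F i) v = \sum_(i | P i) dotv (F i) v.
Proof. exact: (big_morph (fun u => dotv u v) (fun x y => dotvDl x y v) (dotv0l v)). Qed.

Lemma dotv_sumr (I : finType) (P : pred I) (F : I -> 'rV[R]_d) v :
  dotv v (\sum_(i | P i) F i) = \sum_(i | P i) dotv v (F i).
Proof. by rewrite dotvC dotv_suml; apply: eq_bigr => i _; apply: dotvC. Qed.

Lemma dotv_ge0 u : 0 <= dotv u u.
Proof. by apply: sumr_ge0 => k _; rewrite -expr2 sqr_ge0. Qed.

Lemma enorm2 u : enorm u ^+ 2 = dotv u u.
Proof. by rewrite /enorm sqr_sqrtr // dotv_ge0. Qed.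

Lemma dotv_add_sq_le u v : dotv (u + v) (u + v) <= 2 * dotv u u + 2 * dotv v v.
Proof.
have := dotv_ge0 (u - v).
rewrite !dotvBl !dotvBr !dotvDl !dotvDr (dotvC v u) => h; lra.
Qed.

Lemma dotv_abs_le u v : `|dotv u v| <= (dotv u u + dotv v v) / 2.
Proof.
have h1 := dotv_ge0 (u - v); have h2 := dotv_ge0 (u + v).
rewrite !dotvBl !dotvBr !dotvDl !dotvDr (dotvC v u) in h1 h2.
rewrite ler_norml; apply/andP; split; lra.
Qed.
End InnerProduct.

Section UniformAverage.
Variables (R : realType) (n : nat).
Implicit Types (F G : {set 'I_n} -> R).

Lemma avgD m F G : unif_avg m (fun S => F S + G S) = unif_avg m F + unif_avg m G.
Proof. by rewrite /unif_avg big_split mulrDl. Qed.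

Lemma avgZ m a F : unif_avg m (fun S => a * F S) = a * unif_avg m F.
Proof. by rewrite /unif_avg -mulr_sumr mulrA. Qed.

Lemma avg_le m F G : (forall S : {set 'I_n}, #|S| = m -> F S <= G S) ->
  unif_avg m F <= unif_avg m G.
Proof.
move=> h; rewrite /unif_avg; apply: ler_wpM2r; first by rewrite invr_ge0 ler0n.
by apply: ler_sum => S /eqP; apply: h.
Qed.

Lemma avg_eq m F G : (forall S : {set 'I_n}, #|S| = m -> F S = G S) ->
  unif_avg m F = unif_avg m G.
Proof. by move=> h; rewrite /unif_avg; congr (_ / _); apply: eq_bigr => S /eqP /h. Qed.

Lemma nsubsets_gt0 m : (m <= n)%N ->
  (0 : R) < (#|[set S : {set 'I_n} | #|S| == m]|)%:R.
Proof. by move=> h; rewrite card_draws card_ord ltr0n bin_gt0. Qed.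

Lemma sum_subsets_cst m (c : R) :
  \sum_(S : {set 'I_n} | #|S| == m) c =
  (#|[set S : {set 'I_n} | #|S| == m]|)%:R * c.
Proof.
rewrite (eq_bigl (fun S => S \in [set S : {set 'I_n} | #|S| == m])); last first.
  by move=> S; rewrite inE.
by rewrite sumr_const mulr_natl.
Qed.

Lemma avg_cst m (c : R) : (m <= n)%N -> @unif_avg R n m (fun _ => c) = c.
Proof.
move=> h; rewrite /unif_avg sum_subsets_cst mulrC mulKf //.
by rewrite gt_eqF // nsubsets_gt0.
Qed.
End UniformAverage.

(* By symmetry under permutations of the
   indices these counts do not depend on i (resp. on the pair i <> j). *)
Section InclusionCounts.
Variables (R : realType) (n b : nat).

Definition nsubsets : R := (#|[set S : {set 'I_n} | #|S| == b]|)%:R.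

Definition incl_count (i : 'I_n) : R :=
  \sum_(S : {set 'I_n} | #|S| == b) ((i \in S)%:R : R).

Definition pair_count (i j : 'I_n) : R :=
  \sum_(S : {set 'I_n} | #|S| == b) (((i \in S) && (j \in S))%:R : R).

Lemma sum_subsets_perm (s : {perm 'I_n}) (F : {set 'I_n} -> R) :
  \sum_(S : {set 'I_n} | #|S| == b) F (s @: S) =
  \sum_(S : {set 'I_n} | #|S| == b) F S.
Proof.
rewrite [RHS](reindex_inj (imset_inj (@perm_inj _ s))).
by apply: eq_bigl => S; rewrite card_imset //; apply: perm_inj.
Qed.

Lemma incl_count_perm (s : {perm 'I_n}) i : incl_count (s i) = incl_count i.
Proof.
rewrite /incl_count -[LHS](sum_subsets_perm s); apply: eq_bigr => S _.
by rewrite mem_imset //; apply: perm_inj.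
Qed.

Lemma pair_count_perm (s : {perm 'I_n}) i j :
  pair_count (s i) (s j) = pair_count i j.
Proof.
rewrite /pair_count -[LHS](sum_subsets_perm s); apply: eq_bigr => S _.
by rewrite !mem_imset //; apply: perm_inj.
Qed.

Lemma incl_count_const i j : incl_count i = incl_count j.
Proof. by rewrite -(incl_count_perm (tperm i j) i) tpermL. Qed.

Lemma pair_count_diag i : pair_count i i = incl_count i.
Proof. by apply: eq_bigr => S _; rewrite andbb. Qed.

Lemma pair_count_const i j k l : i != j -> k != l -> pair_count i j = pair_count k l.
Proof.
move=> hij hkl.
have e1 := pair_count_perm (tperm i k) i j; rewrite tpermL in e1.
set j' := tperm i k j in e1.
have hj' : j' != k.
  by rewrite /j' -{2}(tpermL i k) (inj_eq perm_inj) eq_sym.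
have e2 := pair_count_perm (tperm j' l) k j'.
by rewrite tpermL tpermD // 1?eq_sym // in e2; rewrite -e1 -e2.
Qed.

Lemma pair_count_ge0 i j : 0 <= pair_count i j.
Proof. by apply: sumr_ge0 => S _; rewrite ler0n. Qed.

(* Double counting: sum_i incl_count i = sum_S |S| = nsubsets * b, so each
   index lies in a fraction b/n of the b-subsets. *)
Lemma incl_countE i : (0 < n)%N -> incl_count i = nsubsets * b%:R / n%:R.
Proof.
move=> n_gt0.
have sum_mem (S : {set 'I_n}) : \sum_j ((j \in S)%:R : R) = #|S|%:R.
  by rewrite -sumr_const [RHS]big_mkcond; apply: eq_bigr => j _; case: (j \in S).
have : \sum_j incl_count j = nsubsets * b%:R.
  rewrite /incl_count exchange_big /= (eq_bigr (fun _ => b%:R)).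
    by rewrite sum_subsets_cst.
  by move=> S /eqP <-; apply: sum_mem.
rewrite (eq_bigr (fun _ => incl_count i)); last by move=> j _; apply: incl_count_const.
rewrite sumr_const card_ord => <-.
by rewrite -(mulr_natr (incl_count i)) mulfK // pnatr_eq0 -lt0n.
Qed.

Lemma pair_count_form : (0 < n)%N -> exists c2 : R, 0 <= c2 /\
  forall i j, pair_count i j = c2 + (i == j)%:R * (nsubsets * b%:R / n%:R - c2).
Proof.
move=> n_gt0.
case: (pselect (exists i j : 'I_n, i != j)) => [[i0 [j0 h0]]|hno].
  exists (pair_count i0 j0); split; first exact: pair_count_ge0.
  move=> i j; have [->|hij] := eqVneq i j.
    by rewrite pair_count_diag incl_countE // mul1r addrC subrK.
  by rewrite mul0r addr0; apply: pair_count_const.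
exists 0; split => // i j.
have -> : i = j by apply: contra_notP hno => hij; exists i, j; apply/eqP.
by rewrite eqxx mul1r subr0 add0r pair_count_diag incl_countE.
Qed.
End InclusionCounts.

Definition batch_mean {R : realType} {n d : nat} (S : {set 'I_n})
    (w : 'I_n -> 'rV[R]_d) : 'rV[R]_d :=
  (#|S|%:R)^-1 *: \sum_(i in S) w i.

Definition pop_mean {R : realType} {n d : nat} (w : 'I_n -> 'rV[R]_d) : 'rV[R]_d :=
  (n%:R)^-1 *: \sum_i w i.

Section PopulationMean.
Variables (R : realType) (n d : nat).
Hypothesis n_gt0 : (0 < n)%N.

Let n_neq0 : (n%:R : R) != 0. Proof. by rewrite pnatr_eq0 -lt0n n_gt0. Qed.

Lemma sum_sq_centered (w : 'I_n -> 'rV[R]_d) :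
  \sum_i dotv (w i - pop_mean w) (w i - pop_mean w) =
  \sum_i dotv (w i) (w i) - n%:R * dotv (pop_mean w) (pop_mean w).
Proof.
have sumE : \sum_i w i = n%:R *: pop_mean w by rewrite /pop_mean scalerA mulfV // scale1r.
move: (pop_mean w) sumE => m sumE.
under eq_bigr do rewrite dotvBl !dotvBr.
rewrite !sumrB -dotv_suml -dotv_sumr sumE sumr_const card_ord dotvZl dotvZr.
by rewrite -mulr_natl; ring.
Qed.

Lemma pop_mean_sq_le (w : 'I_n -> 'rV[R]_d) :
  n%:R * dotv (pop_mean w) (pop_mean w) <= \sum_i dotv (w i) (w i).
Proof.
rewrite -subr_ge0 -sum_sq_centered.
by apply: sumr_ge0 => i _; apply: dotv_ge0.
Qed.
End PopulationMean.

Section SamplingWithoutReplacement.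
Variables (R : realType) (n d b : nat).
Hypotheses (b_gt0 : (0 < b)%N) (b_le_n : (b <= n)%N).
Implicit Types (w : 'I_n -> 'rV[R]_d).

Let n_gt0 : (0 < n)%N. Proof. exact: leq_trans b_gt0 b_le_n. Qed.
Let n_neq0 : (n%:R : R) != 0. Proof. by rewrite pnatr_eq0 -lt0n n_gt0. Qed.
Let b_neq0 : (b%:R : R) != 0. Proof. by rewrite pnatr_eq0 -lt0n b_gt0. Qed.
Let nsubsets_neq0 : nsubsets R n b != 0.
Proof. by rewrite gt_eqF // nsubsets_gt0. Qed.

Lemma sum_batch_sums w :
  \sum_(S : {set 'I_n} | #|S| == b) \sum_(i in S) w i =
  \sum_i incl_count R b i *: w i.
Proof.
under eq_bigr do rewrite big_mkcond /=.
rewrite exchange_big /=; apply: eq_bigr => i _.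
rewrite /incl_count scaler_suml; apply: eq_bigr => S _.
by case: (i \in S); rewrite ?scale1r ?scale0r.
Qed.

Lemma sum_batch_sums_sq w :
  \sum_(S : {set 'I_n} | #|S| == b)
     dotv (\sum_(i in S) w i) (\sum_(i in S) w i) =
  \sum_i \sum_j pair_count R b i j * dotv (w i) (w j).
Proof.
have expand (S : {set 'I_n}) : dotv (\sum_(i in S) w i) (\sum_(i in S) w i) =
    \sum_i \sum_j (((i \in S) && (j \in S))%:R * dotv (w i) (w j)).
  rewrite dotv_suml big_mkcond /=; apply: eq_bigr => i _.
  rewrite dotv_sumr big_mkcond /=; case: (i \in S) => /=.
    by apply: eq_bigr => j _; case: (j \in S); rewrite ?mul1r ?mul0r.
  by rewrite big1 // => j _; rewrite mul0r.
under eq_bigr do rewrite expand.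
rewrite exchange_big /=; apply: eq_bigr => i _.
by rewrite exchange_big /=; apply: eq_bigr => j _; rewrite /pair_count mulr_suml.
Qed.

Lemma avg_batch_mean_dot w y :
  unif_avg b (fun S => dotv (batch_mean S w) y) = dotv (pop_mean w) y.
Proof.
rewrite (avg_eq (G := fun S => (b%:R)^-1 * dotv (\sum_(i in S) w i) y)); last first.
  by move=> S hS; rewrite /batch_mean hS dotvZl.
rewrite /unif_avg -mulr_sumr -dotv_suml sum_batch_sums.
under eq_bigr do rewrite incl_countE //.
rewrite -scaler_sumr dotvZl /pop_mean dotvZl -/(nsubsets R n b).
by field; rewrite nsubsets_neq0 n_neq0 b_neq0.
Qed.

Lemma sum_batch_sums_sq_centered w : \sum_i w i = 0 ->
  \sum_(S : {set 'I_n} | #|S| == b) dotv (\sum_(i in S) w i) (\sum_(i in S) w i)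
  <= nsubsets R n b * b%:R / n%:R * \sum_i dotv (w i) (w i).
Proof.
move=> w_centered; rewrite sum_batch_sums_sq.
have [c2 [c2_ge0 pcE]] := pair_count_form R b n_gt0.
set c1 := nsubsets R n b * b%:R / n%:R in pcE *.
under eq_bigr => i _ do under eq_bigr => j _ do rewrite pcE mulrDl.
rewrite (eq_bigr (fun i => c2 * \sum_j dotv (w i) (w j) +
                           (c1 - c2) * dotv (w i) (w i))); last first.
  move=> i _; rewrite big_split /= mulr_sumr; congr (_ + _).
  rewrite (bigD1 i) //= eqxx mul1r big1 ?addr0 // => j /negbTE.
  by rewrite eq_sym => ->; rewrite !mul0r.
have cross0 : \sum_i \sum_j dotv (w i) (w j) = 0.
  by under eq_bigr do rewrite -dotv_sumr; rewrite -dotv_suml w_centered dotv0l.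
rewrite big_split /= -!mulr_sumr cross0 mulr0 add0r.
by apply: ler_wpM2r; [apply: sumr_ge0 => i _; apply: dotv_ge0 | rewrite lerBlDr lerDl].
Qed.

Lemma avg_batch_mean_sq w c :
  unif_avg b (fun S => dotv (batch_mean S w + c) (batch_mean S w + c)) <=
  dotv (pop_mean w + c) (pop_mean w + c) + (b%:R * n%:R)^-1 * \sum_i dotv (w i) (w i).
Proof.
set m := pop_mean w; set w' := fun i => w i - m.
have sumE : \sum_i w i = n%:R *: m by rewrite /m /pop_mean scalerA mulfV // scale1r.
have w'_centered : \sum_i w' i = 0.
  by rewrite /w' sumrB sumr_const card_ord -scaler_nat sumE subrr.
have meanE (S : {set 'I_n}) : #|S| = b -> batch_mean S w = batch_mean S w' + m.
  move=> hS; rewrite /batch_mean /w' sumrB sumr_const scalerBr hS.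
  by rewrite -[m *+ b]scaler_nat scalerA mulVf // scale1r subrK.
rewrite (avg_eq (G := fun S => dotv (batch_mean S w') (batch_mean S w') +
     (2 * dotv (batch_mean S w') (m + c) + dotv (m + c) (m + c)))); last first.
  move=> S hS; rewrite meanE // -addrA.
  move: (batch_mean S w') (m + c) => a q; rewrite dotvDl !dotvDr (dotvC q a); ring.
rewrite avgD avgD avgZ avg_batch_mean_dot avg_cst //.
have -> : pop_mean w' = 0 by rewrite /pop_mean w'_centered scaler0.
rewrite dotv0l mulr0 add0r addrC lerD2l.
have sq_le : \sum_i dotv (w' i) (w' i) <= \sum_i dotv (w i) (w i).
  by rewrite sum_sq_centered // lerBlDr lerDl mulr_ge0 ?ler0n ?dotv_ge0.
apply: le_trans (ler_wpM2l _ sq_le); last by rewrite invr_ge0 mulr_ge0 ?ler0n.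
rewrite (avg_eq (G := fun S => (b%:R)^-2 *
   dotv (\sum_(i in S) w' i) (\sum_(i in S) w' i))); last first.
  by move=> S hS; rewrite /batch_mean hS dotvZl dotvZr mulrA -expr2 exprVn.
rewrite avgZ /unif_avg mulrA -/(nsubsets R n b) ler_pdivrMr ?nsubsets_gt0 //.
apply: le_trans (ler_wpM2l _ (sum_batch_sums_sq_centered w'_centered)) _.
  by rewrite invr_ge0 exprn_ge0 ?ler0n.
by rewrite le_eqVlt; apply/orP; left; apply/eqP; field; rewrite n_neq0 b_neq0.
Qed.
End SamplingWithoutReplacement.

(* [inner_exp b st F k x] is E F(x_k) for the chain x_0 = x,
   x_{i+1} = st S_i x_i; it is linear and monotone in F, and unfolding the
   last step instead of the first shows E F(x_{k+1}) = E G(x_k) with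
   G y = E_S F(st S y). *)
Section InnerChain.
Variables (R : realType) (n d b : nat).
Hypothesis b_le_n : (b <= n)%N.
Variable st : {set 'I_n} -> 'rV[R]_d -> 'rV[R]_d.
Implicit Types (F G : 'rV[R]_d -> R).

Lemma chain_expD F G k x : inner_exp b st (fun y => F y + G y) k x =
  inner_exp b st F k x + inner_exp b st G k x.
Proof.
elim: k x => [//|k IH] x /=; rewrite -avgD.
by congr unif_avg; apply: funext => S; apply: IH.
Qed.

Lemma chain_expZ a F k x : inner_exp b st (fun y => a * F y) k x =
  a * inner_exp b st F k x.
Proof.
elim: k x => [//|k IH] x /=; rewrite -avgZ.
by congr unif_avg; apply: funext => S; apply: IH.
Qed.

Lemma chain_exp_le F G k x : (forall y, F y <= G y) ->
  inner_exp b st F k x <= inner_exp b st G k x.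
Proof.
move=> FG; elim: k x => [|k IH] x /=; first exact: FG.
by apply: avg_le => S _; apply: IH.
Qed.

Lemma chain_exp_cst c k x : inner_exp b st (fun _ => c) k x = c.
Proof.
elim: k x => [//|k IH] x /=.
by rewrite -[RHS](@avg_cst R n b c b_le_n); congr unif_avg; apply: funext => S; apply: IH.
Qed.

Lemma chain_exp_succ F k x : inner_exp b st F k.+1 x =
  inner_exp b st (fun y => unif_avg b (fun S => F (st S y))) k x.
Proof. by elim: k x => [//|k IH] x /=; congr unif_avg; apply: funext => S; apply: IH. Qed.
End InnerChain.

Section GeometricExpectation.
Variables (R : realType) (B b : nat).
Hypotheses (B_gt0 : (0 < B)%N) (b_gt0 : (0 < b)%N).

Local Notation gam := (geom_param R B b).
Local Notation p := (geom_pmf R B b).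

Definition geom_exp (u : nat -> R) : R := limn (series (fun k => p k * u k)).
Definition geom_summable (u : nat -> R) : Prop := cvgn (series (fun k => p k * u k)).

Lemma geom_param_gt0 : 0 < gam.
Proof. by rewrite /geom_param divr_gt0 // ltr0n // addn_gt0 B_gt0. Qed.

Lemma geom_param_lt1 : gam < 1.
Proof.
rewrite /geom_param ltr_pdivrMr ?mul1r ?ltr0n ?addn_gt0 ?B_gt0 //.
by rewrite ltr_nat -{1}(addn0 B) ltn_add2l.
Qed.

Lemma geom_pmf_ge0 k : 0 <= p k.
Proof.
have g_gt0 := geom_param_gt0; have g_lt1 := geom_param_lt1.
by rewrite /geom_pmf mulr_ge0 // ?subr_ge0 ?exprn_ge0 // ltW.
Qed.

Lemma geom_pmfS k : p k.+1 = gam * p k.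
Proof. by rewrite /geom_pmf exprS; ring. Qed.

Lemma mul_geom_param_inv : B%:R * gam^-1 = B%:R + b%:R.
Proof.
have B_neq0 : (B%:R : R) != 0 by rewrite pnatr_eq0 -lt0n B_gt0.
by rewrite /geom_param invf_div natrD; field.
Qed.

Lemma geom_summableD u v : geom_summable u -> geom_summable v ->
  geom_summable (fun k => u k + v k).
Proof.
move=> hu hv; rewrite /geom_summable.
under eq_fun do rewrite mulrDr.
exact: is_cvg_seriesD.
Qed.

Lemma geom_expD u v : geom_summable u -> geom_summable v ->
  geom_exp (fun k => u k + v k) = geom_exp u + geom_exp v.
Proof.
move=> hu hv; rewrite /geom_exp.
under eq_fun do rewrite mulrDr.
exact: lim_seriesD.
Qed.

Lemma geom_summableZ a u : geom_summable u -> geom_summable (fun k => a * u k).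
Proof.
move=> hu; rewrite /geom_summable.
have -> : (fun k => p k * (a * u k)) = a *: (fun k => p k * u k).
  by apply: funext => k /=; rewrite mulrCA.
exact: is_cvg_seriesZ.
Qed.

Lemma geom_expZ a u : geom_summable u -> geom_exp (fun k => a * u k) = a * geom_exp u.
Proof.
move=> hu; rewrite /geom_exp.
have -> : (fun k => p k * (a * u k)) = a *: (fun k => p k * u k).
  by apply: funext => k /=; rewrite mulrCA.
exact: lim_seriesZ.
Qed.

Lemma geom_exp_le u v : geom_summable u -> geom_summable v ->
  (forall k, u k <= v k) -> geom_exp u <= geom_exp v.
Proof.
by move=> hu hv uv; apply: lim_series_le => // k; rewrite ler_wpM2l ?geom_pmf_ge0.
Qed.

Lemma geom_summable_dominated u v : geom_summable v ->
  (forall k, - v k <= u k <= v k) -> geom_summable u.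
Proof.
move=> hv uv; rewrite /geom_summable.
have huv : geom_summable (fun k => u k + v k).
  apply: (@series_le_cvg _ _ (fun k => p k * (2 * v k))).
  - by move=> k; rewrite mulr_ge0 ?geom_pmf_ge0 //; have := uv k; lra.
  - by move=> k; rewrite mulr_ge0 ?geom_pmf_ge0 //; have := uv k; lra.
  - by move=> k; rewrite ler_wpM2l ?geom_pmf_ge0 //; have := uv k; lra.
  - exact: (geom_summableZ (a := 2) hv).
have -> : (fun k => p k * u k) = (fun k => p k * (u k + v k + -1 * v k)).
  by apply: funext => k; congr (_ * _); ring.
exact: geom_summableD huv (geom_summableZ (a := -1) hv).
Qed.

Lemma geom_summable_cst c : geom_summable (fun _ => c).
Proof.
rewrite /geom_summable; have g_gt0 := geom_param_gt0; have g_lt1 := geom_param_lt1.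
have -> : (fun k => p k * c) = geometric ((1 - gam) * c) gam.
  by apply: funext => k; rewrite /geom_pmf /geometric /=; ring.
by apply: is_cvg_geometric_series; rewrite ger0_norm ?ltW.
Qed.

Lemma geom_exp_shift u : geom_summable u -> geom_summable (fun k => u k.+1) /\
  geom_exp (fun k => u k.+1) = gam^-1 * (geom_exp u - p 0 * u 0).
Proof.
move=> hu.
have g_neq0 : gam != 0 by rewrite gt_eqF // geom_param_gt0.
have seriesE : series (fun k => p k * u k.+1) =
    (fun m => gam^-1 * (series (fun k => p k * u k) m.+1 - p 0 * u 0)).
  apply: funext => m; rewrite /series /= big_nat_recl // addrAC subrr add0r.
  by rewrite mulr_sumr; apply: eq_bigr => k _; rewrite geom_pmfS; field.
have lim_shift : (series (fun k => p k * u k.+1) @ \oo -->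
    gam^-1 * (geom_exp u - p 0 * u 0))%classic.
  rewrite seriesE; apply: cvgMl_tmp; apply: cvgB; last exact: cvg_cst.
  by rewrite (cvg_shiftS (series _)); apply: hu.
by split; [apply: cvgP lim_shift | apply: cvg_lim lim_shift].
Qed.
End GeometricExpectation.

(* E u(N) is linear on summable sequences; stated for the three-term
   combinations that occur in the epoch bound. *)
Lemma geom_exp_lin3 (R : realType) (B b : nat) (a1 a2 a3 : R) (u1 u2 u3 : nat -> R) :
  geom_summable B b u1 -> geom_summable B b u2 -> geom_summable B b u3 ->
  let u := fun k => a1 * u1 k + a2 * u2 k + a3 * u3 k in
  geom_summable B b u /\
  geom_exp B b u = a1 * geom_exp B b u1 + a2 * geom_exp B b u2 + a3 * geom_exp B b u3.
Proof.
move=> s1 s2 s3 u.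
have s12 := geom_summableD (geom_summableZ (a := a1) s1) (geom_summableZ (a := a2) s2).
have s3' := geom_summableZ (a := a3) s3.
split; first exact: geom_summableD s12 s3'.
by rewrite /u geom_expD // geom_expD ?geom_expZ //; apply: geom_summableZ.
Qed.

Section EpochMean.
Variables (R : realType) (n d B b : nat).
Hypotheses (B_gt0 : (0 < B)%N) (b_gt0 : (0 < b)%N) (b_le_n : (b <= n)%N).
Variables (st : {set 'I_n} -> 'rV[R]_d -> 'rV[R]_d) (x0 : 'rV[R]_d).
Implicit Types (F G M : 'rV[R]_d -> R).

Definition epoch_mean F : R := geom_exp B b (fun k => inner_exp b st F k x0).
Definition epoch_summable F : Prop :=
  geom_summable B b (fun k => inner_exp b st F k x0).

Lemma epoch_summable_cst (c : R) : epoch_summable (fun _ => c).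
Proof.
rewrite /epoch_summable (_ : (fun k => _) = fun _ => c).
  exact: geom_summable_cst.
by apply: funext => k; rewrite chain_exp_cst.
Qed.

Lemma epoch_summable_lin (a c : R) F G : epoch_summable F -> epoch_summable G ->
  epoch_summable (fun x => a * F x + c * G x).
Proof.
move=> sF sG; rewrite /epoch_summable.
under eq_fun do rewrite chain_expD !chain_expZ.
exact: geom_summableD (geom_summableZ sF) (geom_summableZ sG).
Qed.

Lemma epoch_summable_dominated F M : epoch_summable M ->
  (forall x, `|F x| <= M x) -> epoch_summable F.
Proof.
move=> sM FM; apply: (geom_summable_dominated B_gt0 b_gt0 sM) => k.
apply/andP; split.
  rewrite -mulN1r -chain_expZ; apply: chain_exp_le => x.
  by rewrite mulN1r; have := FM x; rewrite ler_norml => /andP[].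
by apply: chain_exp_le => x; apply: le_trans (ler_norm _) (FM x).
Qed.

Lemma epoch_mean_le3 (a1 a2 a3 c1 c2 c3 : R) F1 F2 F3 G1 G2 G3 :
  epoch_summable F1 -> epoch_summable F2 -> epoch_summable F3 ->
  epoch_summable G1 -> epoch_summable G2 -> epoch_summable G3 ->
  (forall x, a1 * F1 x + a2 * F2 x + a3 * F3 x <= c1 * G1 x + c2 * G2 x + c3 * G3 x) ->
  a1 * epoch_mean F1 + a2 * epoch_mean F2 + a3 * epoch_mean F3 <=
  c1 * epoch_mean G1 + c2 * epoch_mean G2 + c3 * epoch_mean G3.
Proof.
move=> sF1 sF2 sF3 sG1 sG2 sG3 FG.
have [sF eF] := geom_exp_lin3 a1 a2 a3 sF1 sF2 sF3.
have [sG eG] := geom_exp_lin3 c1 c2 c3 sG1 sG2 sG3.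
rewrite /epoch_mean -eF -eG; apply: geom_exp_le => // k.
by rewrite -!chain_expZ -!chain_expD; apply: chain_exp_le.
Qed.

Lemma epoch_mean_succ F : epoch_summable F -> F x0 = 0 ->
  let G := fun y => unif_avg b (fun S => F (st S y)) in
  epoch_summable G /\ B%:R * epoch_mean G = (B + b)%:R * epoch_mean F.
Proof.
move=> sF F0 G.
have succE : (fun k => inner_exp b st G k x0) = (fun k => inner_exp b st F k.+1 x0).
  by apply: funext => k; rewrite chain_exp_succ.
have [sFS eFS] := geom_exp_shift B_gt0 sF.
rewrite /epoch_summable /epoch_mean succE; split => //.
by rewrite eFS /= F0 mulr0 subr0 mulrA mul_geom_param_inv // natrD.
Qed.
End EpochMean.

Section Smoothness.
Variables (R : realType) (n d : nat) (gradf : 'I_n -> 'rV[R]_d -> 'rV[R]_d) (L : R).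
Hypothesis gradf_lip : forall i, L_lipschitz_grad L (gradf i).

Lemma lipschitz_sq i x y : dotv (gradf i x - gradf i y) (gradf i x - gradf i y) <=
  L ^+ 2 * dotv (x - y) (x - y).
Proof.
have lip := gradf_lip i x y; rewrite -!enorm2 -exprMn !expr2.
by apply: ler_pM => //; apply: sqrtr_ge0.
Qed.

Lemma grad_full_lipschitz_sq x y : (0 < n)%N ->
  dotv (grad_full gradf x - grad_full gradf y) (grad_full gradf x - grad_full gradf y)
  <= L ^+ 2 * dotv (x - y) (x - y).
Proof.
move=> n_gt0; set w := fun i => gradf i x - gradf i y.
have -> : grad_full gradf x - grad_full gradf y = pop_mean w.
  by rewrite /grad_full /pop_mean /w sumrB scalerBr.
rewrite -(@ler_pM2l _ n%:R) ?ltr0n //; apply: le_trans (pop_mean_sq_le n_gt0 w) _.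
apply: le_trans (ler_sum _ (fun i _ => lipschitz_sq i x y)) _.
by rewrite sumr_const card_ord mulr_natl.
Qed.
End Smoothness.

Section OneStep.
Variables (R : realType) (n d : nat) (gradf : 'I_n -> 'rV[R]_d -> 'rV[R]_d).
Variables (L lam eta : R) (b : nat) (x0 g : 'rV[R]_d).
Hypotheses (b_gt0 : (0 < b)%N) (b_le_n : (b <= n)%N).
Hypothesis gradf_lip : forall i, L_lipschitz_grad L (gradf i).

Let gF := grad_full gradf.
Let e := lam *: g - (1 - lam) *: gF x0.
Let w x := fun i => (1 - lam) *: (gradf i x - gradf i x0).

Lemma step_displacement S x : alg3_step gradf lam eta x0 g S x - x0 =
  (x - x0) - eta *: (batch_mean S (w x) + lam *: g).
Proof.
rewrite /alg3_step /batch_mean /w /grad_batch -scaler_sumr sumrB scalerA mulrC.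
by rewrite -scalerA scalerBr !scalerBr addrAC.
Qed.

Lemma pop_direction x : pop_mean (w x) + lam *: g = (1 - lam) *: gF x + e.
Proof.
rewrite /e /gF /pop_mean /w /grad_full -scaler_sumr sumrB scalerA mulrC -scalerA.
by rewrite !scalerBr addrA addrAC.
Qed.

Lemma avg_direction_sq x :
  unif_avg b (fun S => dotv (batch_mean S (w x) + lam *: g)
                            (batch_mean S (w x) + lam *: g)) <=
  (1 - lam) ^+ 2 * L ^+ 2 * dotv (x - x0) (x - x0) / b%:R
  + 2 * (1 - lam) ^+ 2 * dotv (gF x) (gF x) + 2 * dotv e e.
Proof.
have n_gt0 : (0 < n)%N := leq_trans b_gt0 b_le_n.
have sum_le : \sum_i dotv (w x i) (w x i) <=
    n%:R * ((1 - lam) ^+ 2 * (L ^+ 2 * dotv (x - x0) (x - x0))).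
  apply: (@le_trans _ _ (\sum_(i < n) (1 - lam) ^+ 2 *
                             (L ^+ 2 * dotv (x - x0) (x - x0)))).
    apply: ler_sum => i _; rewrite /w dotvZl dotvZr mulrA -expr2.
    by rewrite ler_wpM2l ?sqr_ge0 ?lipschitz_sq.
  by rewrite sumr_const card_ord mulr_natl.
have var_le : (b%:R * n%:R)^-1 * \sum_i dotv (w x i) (w x i) <=
    (1 - lam) ^+ 2 * L ^+ 2 * dotv (x - x0) (x - x0) / b%:R.
  apply: le_trans (ler_wpM2l _ sum_le) _; first by rewrite invr_ge0 mulr_ge0 ?ler0n.
  rewrite le_eqVlt; apply/orP; left; apply/eqP.
  by field; rewrite !pnatr_eq0 -!lt0n b_gt0 n_gt0.
have mean_sq : dotv ((1 - lam) *: gF x + e) ((1 - lam) *: gF x + e) <=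
    2 * (1 - lam) ^+ 2 * dotv (gF x) (gF x) + 2 * dotv e e.
  by apply: le_trans (dotv_add_sq_le _ _) _; rewrite dotvZl dotvZr; lra.
have := avg_batch_mean_sq b_gt0 b_le_n (w x) (lam *: g).
rewrite pop_direction => h; lra.
Qed.

Lemma one_step_bound x :
  unif_avg b (fun S => enorm (alg3_step gradf lam eta x0 g S x - x0) ^+ 2)
  - enorm (x - x0) ^+ 2
  + 2 * eta * ((1 - lam) * dotv (gF x) (x - x0) + dotv e (x - x0))
  <= eta ^+ 2 * ((1 - lam) ^+ 2 * L ^+ 2 * enorm (x - x0) ^+ 2 / b%:R
       + 2 * (1 - lam) ^+ 2 * enorm (gF x) ^+ 2 + 2 * enorm e ^+ 2).
Proof.
set y := x - x0; set v := fun S => batch_mean S (w x) + lam *: g.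
have expandE : (fun S => enorm (alg3_step gradf lam eta x0 g S x - x0) ^+ 2) =
    (fun S => dotv y y + ((- 2 * eta) * dotv (v S) y + eta ^+ 2 * dotv (v S) (v S))).
  apply: funext => S; rewrite enorm2 step_displacement /y /v.
  move: (x - x0) (batch_mean S (w x) + lam *: g) => a u.
  by rewrite !dotvBl !dotvBr !dotvZl !dotvZr (dotvC a u); ring.
have meanE : unif_avg b (fun S => dotv (v S) y) = (1 - lam) * dotv (gF x) y + dotv e y.
  rewrite /v; under eq_fun do rewrite dotvDl.
  rewrite avgD avg_batch_mean_dot // avg_cst // -dotvDl pop_direction.
  by rewrite dotvDl dotvZl.
rewrite expandE avgD avgD avgZ avgZ avg_cst // meanE !enorm2.
have := ler_wpM2l (sqr_ge0 eta) (avg_direction_sq x); rewrite -/v => h; lra.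
Qed.
End OneStep.

Section OneEpoch.
Variables (R : realType) (n d : nat) (gradf : 'I_n -> 'rV[R]_d -> 'rV[R]_d).
Variables (L lam eta : R) (B b : nat) (x0 g : 'rV[R]_d).
Hypotheses (B_gt0 : (0 < B)%N) (b_gt0 : (0 < b)%N) (b_le_n : (b <= n)%N).
Hypothesis gradf_lip : forall i, L_lipschitz_grad L (gradf i).

Let st := alg3_step gradf lam eta x0 g.
Let gF := grad_full gradf.
Let e := lam *: g - (1 - lam) *: gF x0.
Local Notation summable := (epoch_summable B b st x0).
Local Notation E := (epoch_mean B b st x0).

(* A finite second moment of the displacement controls the other moments:
   |<e, y>| and |<grad f(x), y>| by Young's inequality, and |grad f(x)|^2 by
   smoothness, |grad f(x)|^2 <= 2 |grad f(x0)|^2 + 2 L^2 |x - x0|^2. *)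
Lemma epoch_moments_summable :
  summable (fun x => enorm (x - x0) ^+ 2) ->
  [/\ summable (fun x => dotv e (x - x0)),
      summable (fun x => enorm (gF x) ^+ 2) &
      summable (fun x => dotv (gF x) (x - x0))].
Proof.
move=> sD; have n_gt0 : (0 < n)%N := leq_trans b_gt0 b_le_n.
have young (u : 'rV[R]_d -> 'rV[R]_d) : summable (fun x => enorm (u x) ^+ 2) ->
    summable (fun x => dotv (u x) (x - x0)).
  move=> su; apply: (epoch_summable_dominated B_gt0 b_gt0
    (epoch_summable_lin (a := 2^-1) (c := 2^-1) su sD)) => x.
  by apply: le_trans (dotv_abs_le _ _) _; rewrite !enorm2; lra.
have sN : summable (fun x => enorm (gF x) ^+ 2).
  apply: (epoch_summable_dominated B_gt0 b_gt0
    (epoch_summable_lin (a := 2) (c := 2 * L ^+ 2)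
       (epoch_summable_cst B_gt0 b_gt0 b_le_n (c := enorm (gF x0) ^+ 2)) sD)) => x.
  rewrite ger0_norm ?sqr_ge0 // !enorm2 -[gF x](subrK (gF x0)).
  apply: le_trans (dotv_add_sq_le _ _) _.
  have := grad_full_lipschitz_sq gradf_lip x x0 n_gt0; rewrite -/gF; lra.
split => //; last exact: young.
exact: young (epoch_summable_cst B_gt0 b_gt0 b_le_n (c := enorm e ^+ 2)).
Qed.

Lemma epoch_bound : summable (fun x => enorm (x - x0) ^+ 2) ->
  (b%:R - (1 - lam) ^+ 2 * eta ^+ 2 * L ^+ 2 * B%:R / b%:R)
      * E (fun x => enorm (x - x0) ^+ 2)
    + 2 * eta * B%:R * E (fun x => dotv e (x - x0))
  <= - (2 * (1 - lam) * eta * B%:R) * E (fun x => dotv (gF x) (x - x0))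
     + 2 * (1 - lam) ^+ 2 * eta ^+ 2 * B%:R * E (fun x => enorm (gF x) ^+ 2)
     + 2 * eta ^+ 2 * B%:R * E (fun _ => enorm e ^+ 2).
Proof.
move=> sD; have [sE sN sG] := epoch_moments_summable sD.
have D0 : enorm (x0 - x0) ^+ 2 = 0 by rewrite subrr /enorm dotv0l sqrtr0 expr0n.
have [sT eT] := epoch_mean_succ B_gt0 sD D0.
have pointwise x :
    B%:R * unif_avg b (fun S => enorm (st S x - x0) ^+ 2)
    + 2 * eta * B%:R * (1 - lam) * dotv (gF x) (x - x0)
    + 2 * eta * B%:R * dotv e (x - x0)
  <= (B%:R + (1 - lam) ^+ 2 * eta ^+ 2 * L ^+ 2 * B%:R / b%:R) * enorm (x - x0) ^+ 2
    + 2 * (1 - lam) ^+ 2 * eta ^+ 2 * B%:R * enorm (gF x) ^+ 2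
    + 2 * eta ^+ 2 * B%:R * enorm e ^+ 2.
  have := ler_wpM2l (ler0n R B) (one_step_bound lam eta x0 g b_gt0 b_le_n gradf_lip x).
  rewrite -/st -/gF -/e; lra.
have := epoch_mean_le3 B_gt0 b_gt0 sT sG sE sD sN
  (epoch_summable_cst B_gt0 b_gt0 b_le_n (c := enorm e ^+ 2)) pointwise.
rewrite eT natrD; lra.
Qed.
End OneEpoch.

Theorem lemmaB9 (R : realType) (n d : nat)
    (f : 'I_n -> 'rV[R]_d -> R) (gradf : 'I_n -> 'rV[R]_d -> 'rV[R]_d)
    (L lam eta : R) (B b : nat) (x0 : 'rV[R]_d) :
  (forall i, is_gradient (f i) (gradf i)) ->
  (forall i, L_lipschitz_grad L (gradf i)) ->
  (0 < B <= n)%N -> (0 < b <= n)%N ->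
  0 < lam < 1 -> 0 < eta ->
  eta ^+ 2 * L ^+ 2 * B%:R < b%:R ^+ 2 ->
  finite_second_moment gradf lam eta B b x0 ->
  let E := epoch_exp gradf lam eta B b x0 in
  let e := err_j gradf lam x0 in
  let gF := grad_full gradf in
  (b%:R - (1 - lam) ^+ 2 * eta ^+ 2 * L ^+ 2 * B%:R / b%:R)
      * E (fun I x => enorm (x - x0) ^+ 2)
    + 2 * eta * B%:R * E (fun I x => dotv (e I) (x - x0))
  <= - (2 * (1 - lam) * eta * B%:R) * E (fun I x => dotv (gF x) (x - x0))
     + 2 * (1 - lam) ^+ 2 * eta ^+ 2 * B%:R * E (fun I x => enorm (gF x) ^+ 2)
     + 2 * eta ^+ 2 * B%:R * E (fun I x => enorm (e I) ^+ 2).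
Proof.
move=> _ gradf_lip /andP[B_gt0 _] /andP[b_gt0 b_le_n] _ _ _ finite_moment /=.
rewrite /epoch_exp -!avgZ -!avgD; apply: avg_le => I I_card.
exact: epoch_bound B_gt0 b_gt0 b_le_n gradf_lip (finite_moment I I_card).
Qed.
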